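(* Among all spiro hexagonal chains with $n$ hexagons, $n\ge4$: (i) the unique spiro hexagonal chain with the maximum Wiener index is the spiro para-chain $P_n$; (ii) the unique spiro hexagonal chain with the second maximal Wiener index is the spiro hexagonal chain with cut-vertex sequence $(c_2,\dots,c_{n-1})=(p_1,\dots,p_{n-3},m_{n-2})$; (iii) the unique spiro hexagonal chain with the third maximal Wiener index is the spiro hexagonal chain with cut-vertex sequence $(c_2,\dots,c_{n-1})=(p_1,\dots,p_{n-4},m_{n-3},p_{n-2})$.
   Context: The Wiener index is $W(G)=\sum_{\{u,v\}\subseteq V(G)}d_G(u,v)$, $d_G$ the shortest-path distance. A spiro hexagonal chain of length $n$, $G_n=H_0H_1\cdots H_{n-1}$, is a connected graph in which every block is a hexagon (6-cycle) $H_0,\dots,H_{n-1}$, each hexagon has at most two cut-vertices, each cut-vertex is shared by exactly two hexagons, and for $k=1,\dots,n-1$ the hexagons $H_{k-1}$ and $H_k$ share the cut-vertex $c_k$. For $k\ge1$, a vertex of $H_k$ at distance $1$, $2$, $3$ from $c_k$ is called an ortho-, meta-, para-vertex of $H_k$, denoted $o_k,m_k,p_k$. For $2\le k\le n-1$, $c_k$ is one of $o_{k-1},m_{k-1},p_{k-1}$, and the sequence $(c_2,\dots,c_{n-1})$ (recording these types) is the cut-vertex sequence, which determines the chain up to isomorphism; chains are considered up to isomorphism. The spiro para-chain $P_n$ is the chain with $c_k=p_{k-1}$ for all $2\le k\le n-1$. *)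

From mathcomp Require Import all_boot.
Set Implicit Arguments. Unset Strict Implicit. Unset Printing Implicit Defensive.

Fixpoint reach (T : finType) (e : rel T) (k : nat) (u v : T) : bool :=
  match k with
  | 0 => u == v
  | k'.+1 => reach e k' u v || [exists w, reach e k' u w && e w v]
  end.

(* shortest-path distance: least k with a walk of length <= k
   (= #|T| if v is unreachable; never happens for connected graphs) *)
Definition gdist (T : finType) (e : rel T) (u v : T) : nat :=
  find (fun k => reach e k u v) (iota 0 #|T|).

Definition wiener (N : nat) (e : rel 'I_N) : nat :=
  \sum_(u : 'I_N) \sum_(v : 'I_N | (u < v)%N) gdist e u v.

Definition graph_iso (T : finType) (e1 e2 : rel T) : Prop :=
  exists f : T -> T, bijective f /\ forall u v, e1 u v = e2 (f u) (f v).

(* type of the cut-vertex c_k in H_{k-1}: ortho / meta / para,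
   i.e. at distance 1 / 2 / 3 from c_{k-1} in H_{k-1} *)
Inductive ctype := Ortho | Meta | Para.

Definition ctype_dist (t : ctype) : nat :=
  match t with Ortho => 1 | Meta => 2 | Para => 3 end.

(* Concrete model of the chain G_n = H_0 ... H_{n-1} with cut-vertex sequence
   s = (c_2, ..., c_{n-1}) (s`_i is the type of c_{i+2}).
   Vertices are 0 .. 5n.  H_0 is the cycle 0-1-2-3-4-5-0 and c_1 = 0.
   For k >= 1, H_k is the cycle c_k, 5k+1, 5k+2, 5k+3, 5k+4, 5k+5, c_k,
   and c_{k+1} = 5k + ctype_dist (type of c_{k+1}), i.e. the vertex of H_k
   at distance 1,2,3 from c_k. *)
Definition cutv (s : seq ctype) (k : nat) : nat :=
  match k with
  | 0 | 1 => 0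
  | k'.+1 => 5 * k' + ctype_dist (nth Para s k'.-1)
  end.

Definition hexpos (s : seq ctype) (k j : nat) : nat :=
  if k == 0 then j else if j == 0 then cutv s k else 5 * k + j.

Definition spiro_adj (n : nat) (s : seq ctype) : rel 'I_(5 * n + 1) :=
  fun u v => [exists k : 'I_n, exists j : 'I_6,
     ((hexpos s k j == u) && (hexpos s k ((j + 1) %% 6) == v))
  || ((hexpos s k j == v) && (hexpos s k ((j + 1) %% 6) == u))].

Arguments spiro_adj n s : clear implicits.

Definition spiro_wiener (n : nat) (s : seq ctype) : nat :=
  wiener (spiro_adj n s).

Definition para_seq (n : nat) : seq ctype := nseq (n - 2) Para.
Definition second_seq (n : nat) : seq ctype := rcons (nseq (n - 3) Para) Meta.
Definition third_seq (n : nat) : seq ctype := nseq (n - 4) Para ++ [:: Meta; Para].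

From mathcomp Require Import all_boot zify.
Set Implicit Arguments. Unset Strict Implicit. Unset Printing Implicit Defensive.

(* Shortest paths of a spiro chain run through the cut vertices, which gives
   every distance in closed form; summing them,
     W(G_n) = 27 n + 45 n (n - 1) + 25 \sum_(i < n - 2) (i + 1) (n - 2 - i) d_i,
   where d_i in {1, 2, 3} is the distance from c_(i+1) to c_(i+2) (ortho, meta,
   para).  Hence W(P_n) - W(G_n) = 25 \sum_i (i + 1) (n - 2 - i) (3 - d_i).  The
   weights (i + 1) (n - 2 - i) are smallest (n - 2) at the two ends and next
   smallest (2 (n - 3)) one step inside, so the runners-up have a single meta
   cut vertex at an end, resp. one step from an end; reversing the cut-vertex
   sequence gives an isomorphic chain, which identifies the two ends. *)

(** * Graph distances *)

Section GraphDistance.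
Variables (T : finType) (e : rel T).

Lemma gdist_refl (u : T) : gdist e u u = 0.
Proof.
rewrite /gdist; have : 0 < #|T| by apply/card_gt0P; exists u.
by case: #|T| => //= k _; rewrite eqxx.
Qed.

Lemma gdist_eq (u v : T) (m : nat) : m < #|T| -> reach e m u v ->
  (forall k, k < m -> ~~ reach e k u v) -> gdist e u v = m.
Proof.
move=> lt_mT reach_m below_m; rewrite /gdist.
set i := find _ _.
have has_m : has (fun k => reach e k u v) (iota 0 #|T|).
  by apply/hasP; exists m; rewrite ?mem_iota.
have lt_iT : i < #|T| by rewrite -[#|T|](size_iota 0) -has_find.
case: (ltngtP i m) => // [lt_im | lt_mi].
- by have := nth_find 0 has_m; rewrite -/i nth_iota // add0n (negbTE (below_m _ lt_im)).
- by have := before_find 0 lt_mi; rewrite nth_iota ?add0n ?reach_m //; lia.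
Qed.

Section DistanceProfile.
Variables (u : T) (d : T -> nat).
Hypotheses (d_root : d u = 0) (d_eq0 : forall v, d v = 0 -> v = u).
Hypothesis d_edge : forall w v, e w v -> d v <= d w + 1.
Hypothesis d_pred : forall v m, d v = m.+1 -> exists2 w, e w v & d w = m.
Hypothesis d_small : forall v, d v < #|T|.

Lemma reach_profile k v : reach e k u v -> d v <= k.
Proof.
elim: k v => [|k IHk] v /=; first by move/eqP <-; rewrite d_root.
case/orP => [/IHk | /existsP [w /andP [/IHk d_w /d_edge]]]; lia.
Qed.

Lemma profile_reach m v : d v = m -> reach e m u v.
Proof.
elim: m v => [|m IHm] v /= dv; first by rewrite (d_eq0 dv).
have [w e_wv dw] := d_pred dv.
by apply/orP; right; apply/existsP; exists w; rewrite IHm.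
Qed.

Lemma gdist_profile v : gdist e u v = d v.
Proof.
apply: gdist_eq; [exact: d_small | exact: profile_reach |].
by move=> k lt_k; apply/negP => /reach_profile; lia.
Qed.

End DistanceProfile.

Lemma reach_iso (e' : rel T) (f : T -> T) : bijective f ->
  (forall u v, e u v = e' (f u) (f v)) ->
  forall k u v, reach e k u v = reach e' k (f u) (f v).
Proof.
move=> [g fK gK] ee'; elim=> [|k IHk] u v /=; first by rewrite (can_eq fK).
rewrite IHk; congr (_ || _); apply/existsP/existsP => [[w] | [w]].
  by rewrite IHk ee'; exists (f w).
by exists (g w); rewrite IHk ee' gK.
Qed.

End GraphDistance.

Lemma gdist_iso (T : finType) (e e' : rel T) (f : T -> T) : bijective f ->
  (forall u v, e u v = e' (f u) (f v)) ->
  forall u v, gdist e u v = gdist e' (f u) (f v).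
Proof. by move=> bij_f ee' u v; apply: eq_find => k; apply: reach_iso. Qed.

Lemma wiener_double N (e : rel 'I_N) :
  (forall u v, gdist e u v = gdist e v u) ->
  2 * wiener e = \sum_u \sum_v gdist e u v.
Proof.
move=> gdist_sym.
have wienerE : wiener e = \sum_(u : 'I_N) \sum_(v : 'I_N) (if u < v then gdist e u v else 0).
  by apply: eq_bigr => u _; rewrite big_mkcond.
rewrite mul2n -addnn wienerE {2}exchange_big -big_split.
apply: eq_bigr => u _; rewrite -big_split; apply: eq_bigr => v _ /=.
case: (ltngtP u v) => [_ | _ | /val_inj ->]; last by rewrite gdist_refl.
  by rewrite addn0.
by rewrite add0n gdist_sym.
Qed.

Lemma wiener_iso N (e1 e2 : rel 'I_N) :
  (forall u v, gdist e1 u v = gdist e1 v u) ->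
  (forall u v, gdist e2 u v = gdist e2 v u) ->
  graph_iso e1 e2 -> wiener e1 = wiener e2.
Proof.
move=> sym1 sym2 [f [bij_f e12]].
apply/eqP; rewrite -(eqn_pmul2l (isT : 0 < 2)) !wiener_double //; apply/eqP.
rewrite [RHS](reindex_inj (bij_inj bij_f)); apply: eq_bigr => u _.
rewrite [RHS](reindex_inj (bij_inj bij_f)); apply: eq_bigr => v _.
exact: gdist_iso bij_f e12 u v.
Qed.

Lemma graph_iso_refl (T : finType) (e : rel T) : graph_iso e e.
Proof. by exists id; split=> //; exists id. Qed.

(** * Distances in a spiro chain *)

Definition hexd (i j : nat) : nat := minn (i - j + (j - i)) (6 - (i - j + (j - i))).

Lemma hexdC i j : hexd i j = hexd j i.
Proof. rewrite /hexd; lia. Qed.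

Lemma hexd_le3 i j : hexd i j <= 3.
Proof. rewrite /hexd; lia. Qed.

Lemma hexdii i : hexd i i = 0.
Proof. rewrite /hexd; lia. Qed.

Lemma hexd0n p : p <= 3 -> hexd 0 p = p.
Proof. rewrite /hexd; lia. Qed.

Lemma hexd_eq0 i j : i < 6 -> j < 6 -> (hexd i j == 0) = (i == j).
Proof. rewrite /hexd => *; apply/eqP/eqP; lia. Qed.

Lemma hexd_succ i j : i < 6 -> j < 6 ->
  hexd i j <= hexd i ((j + 1) %% 6) + 1 /\ hexd i ((j + 1) %% 6) <= hexd i j + 1.
Proof.
move=> lt_i6 lt_j6; have -> : (j + 1) %% 6 = if j == 5 then 0 else j.+1.
  by case: j lt_j6 => [|[|[|[|[|[|]]]]]].
rewrite /hexd; case: eqP; lia.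
Qed.

Lemma hexd_step t j : t < 6 -> j < 6 -> 0 < hexd t j ->
  exists2 j', j' < 6 & hexd t j' = (hexd t j).-1 /\
                       (j' = (j + 1) %% 6 \/ j = (j' + 1) %% 6).
Proof.
move=> lt_t6 lt_j6 pos_tj.
exists (if hexd t ((j + 1) %% 6) < hexd t j then (j + 1) %% 6 else (j + 5) %% 6).
  by case: ifP => _; apply: ltn_pmod.
move: pos_tj; case: t lt_t6 => [|[|[|[|[|[|//]]]]]] _;
  by case: j lt_j6 => [|[|[|[|[|[|//]]]]]] _ //= _; split=> //; by [left|right].
Qed.

(* Vertex 0 is position 0 of H_0 and vertex 5 k + j (1 <= j <= 5) is position j
   of H_k, positions being counted from c_k as in hexpos. *)
Definition hex_of (v : nat) : nat := if v is v'.+1 then v' %/ 5 else 0.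
Definition pos_of (v : nat) : nat := if v is v'.+1 then v' %% 5 + 1 else 0.

Lemma pos_of_le5 v : pos_of v <= 5.
Proof. case: v => //= v; lia. Qed.

Lemma pos_of_gt0 v : 0 < hex_of v -> 0 < pos_of v.
Proof. case: v => //= v; lia. Qed.

Lemma hex_of_lt n v : 0 < n -> v < 5 * n + 1 -> hex_of v < n.
Proof. case: v => [|v] /=; lia. Qed.

Lemma hexpos_of s v : hexpos s (hex_of v) (pos_of v) = v.
Proof. rewrite /hexpos; case: v => //= v; rewrite addn1; case: eqP => /=; lia. Qed.

Lemma hexpos_coord s k j : j < 6 -> (j != 0) || (k == 0) ->
  hex_of (hexpos s k j) = k /\ pos_of (hexpos s k j) = j.
Proof.
rewrite /hexpos => lt_j6; case: (eqVneq k 0) => [-> _|k_neq0] /=.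
  by case: j lt_j6 => //= j; lia.
rewrite orbF => j_neq0; rewrite (negbTE j_neq0).
by case def_v : (5 * k + j) => [|w] /=; lia.
Qed.

(* Position in H_k of the cut vertex c_(k+1); for k = 0 this is c_1 = 0. *)
Definition cut_pos (s : seq ctype) (k : nat) : nat :=
  if k is k'.+1 then ctype_dist (nth Para s k') else 0.

(* spine s k = d(c_1, c_(k+1)) *)
Fixpoint spine (s : seq ctype) (k : nat) : nat :=
  if k is k'.+1 then spine s k' + cut_pos s k else 0.

Lemma ctype_dist_bounds t : 1 <= ctype_dist t <= 3.
Proof. by case: t. Qed.

Lemma cut_pos_le3 s k : cut_pos s k <= 3.
Proof. by case: k => //= k; case: (nth _ _ _). Qed.

Lemma cut_pos_gt0 s k : 0 < k -> 0 < cut_pos s k.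
Proof. by case: k => //= k; case: (nth _ _ _). Qed.

Lemma spine_mono s : {homo spine s : k l / k <= l}.
Proof. by apply: homo_leq => // [k l m /leq_trans /[apply] | k]; last exact: leq_addr. Qed.

Lemma spine_diff_le s k l : k <= l -> spine s l - spine s k <= 3 * (l - k).
Proof.
elim: l => [|l IHl]; first by rewrite leqn0 => /eqP ->.
rewrite leq_eqVlt ltnS => /orP [/eqP -> | le_kl]; first lia.
have := IHl le_kl; have := spine_mono s le_kl; have := cut_pos_le3 s l.+1.
rewrite /=; lia.
Qed.

Lemma hexpos_cut s k : hexpos s k.+1 0 = hexpos s k (cut_pos s k).
Proof. by case: k => //= k; rewrite /hexpos /=; case: (nth _ _ _) => /=; lia. Qed.

Section ChainDistance.
Variable s : seq ctype.

(* A vertex at position i of H_a reaches H_k through the position entry a i k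
   of H_k, at distance entry_cost a i k. *)
Definition entry (a i k : nat) : nat :=
  if a < k then 0 else if a == k then i else cut_pos s k.

Definition entry_cost (a i k : nat) : nat :=
  if a < k then hexd i (cut_pos s a) + (spine s k.-1 - spine s a)
  else if a == k then 0 else hexd 0 i + (spine s a.-1 - spine s k).

Definition chain_dist (a i k j : nat) : nat :=
  entry_cost a i k + hexd (entry a i k) j.

Definition vdist (u v : nat) : nat :=
  chain_dist (hex_of u) (pos_of u) (hex_of v) (pos_of v).

Lemma entry_lt6 a i k : i < 6 -> entry a i k < 6.
Proof. by rewrite /entry; have := cut_pos_le3 s k; case: ifP => _ //; case: ifP => _; lia. Qed.

Lemma chain_dist_cut a i k : chain_dist a i k (cut_pos s k) = chain_dist a i k.+1 0.
Proof.
rewrite /chain_dist /entry /entry_cost; have le_p3 := cut_pos_le3 s k.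
case: (ltngtP a k) => [lt_ak | lt_ka | ->].
- rewrite ltnS ltnW // hexd0n //; case: k lt_ak le_p3 => // k lt_ak _ /=.
  by rewrite hexdii; have := spine_mono s (lt_ak : a <= k); lia.
- have -> : (a < k.+1) = false by apply/negbTE; rewrite -leqNgt.
  rewrite hexdii addn0 /=; case: (eqVneq a k.+1) => [-> | a_neq] /=.
    by rewrite subnn addn0 hexdC.
  have le_ka : k.+1 <= a.-1 by lia.
  rewrite [hexd _ 0]hexdC (hexd0n (cut_pos_le3 s k.+1)).
  by have := spine_mono s le_ka; rewrite /=; lia.
- by rewrite ltnSn /= subnn addn0 [hexd 0 0]hexdii addn0.
Qed.

Lemma vdist_hexpos u k j : j < 6 -> vdist u (hexpos s k j) = chain_dist (hex_of u) (pos_of u) k j.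
Proof.
move=> lt_j6; case: (boolP ((j != 0) || (k == 0))) => [coord | ].
  by rewrite /vdist; case: (hexpos_coord s lt_j6 coord) => -> ->.
rewrite negb_or negbK => /andP [/eqP -> ]; case: k => // k _.
have lt_p6 : cut_pos s k < 6 by have := cut_pos_le3 s k; lia.
have coord : (cut_pos s k != 0) || (k == 0).
  by case: (posnP k) => [-> // | /(cut_pos_gt0 s)]; rewrite lt0n => ->.
rewrite hexpos_cut /vdist; case: (hexpos_coord s lt_p6 coord) => -> ->.
exact: chain_dist_cut.
Qed.

Lemma chain_dist_succ a i k j : i < 6 -> j < 6 ->
  chain_dist a i k j <= chain_dist a i k ((j + 1) %% 6) + 1 /\
  chain_dist a i k ((j + 1) %% 6) <= chain_dist a i k j + 1.
Proof.
move=> lt_i6 lt_j6; rewrite /chain_dist.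
have [] := hexd_succ (entry_lt6 a k lt_i6) lt_j6; lia.
Qed.

Lemma vdist_refl u : vdist u u = 0.
Proof. by rewrite /vdist /chain_dist /entry /entry_cost ltnn eqxx hexdii. Qed.

Lemma vdistC u v : vdist u v = vdist v u.
Proof.
rewrite /vdist /chain_dist /entry /entry_cost.
by case: (ltngtP (hex_of u) (hex_of v)) => _ /=; rewrite /hexd; lia.
Qed.

Lemma vdist_eq0 u v : vdist u v = 0 -> u = v.
Proof.
rewrite /vdist /chain_dist /entry /entry_cost => /eqP d0.
rewrite -(hexpos_of s u) -(hexpos_of s v); move: d0.
have := pos_of_le5 u; have := pos_of_le5 v.
case: (ltngtP (hex_of u) (hex_of v)) => [lt_uv | lt_vu | ->] le_v5 le_u5.
- by have := pos_of_gt0 (leq_ltn_trans (leq0n _) lt_uv); rewrite /hexd; lia.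
- by have := pos_of_gt0 (leq_ltn_trans (leq0n _) lt_vu); rewrite /hexd; lia.
- by rewrite add0n hexd_eq0 ?ltnS // => /eqP ->.
Qed.

Lemma vdist_le u k j : j < 6 -> vdist u (hexpos s k j) <= 3 * (maxn (hex_of u) k).+1.
Proof.
move=> lt_j6; rewrite vdist_hexpos // /chain_dist /entry_cost.
have := hexd_le3 (pos_of u) (cut_pos s (hex_of u)); have := hexd_le3 0 (pos_of u).
have := hexd_le3 (entry (hex_of u) (pos_of u) k) j.
case: (ltngtP (hex_of u) k) => [lt_uk | lt_ku | _]; last lia.
- have := spine_diff_le s (_ : hex_of u <= k.-1); lia.
- have := spine_diff_le s (_ : k <= (hex_of u).-1); lia.
Qed.

End ChainDistance.

Lemma off_entry s n u v : 0 < n -> u < 5 * n + 1 -> v < 5 * n + 1 -> u != v ->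
  exists k j, [/\ k < n, j < 6, v = hexpos s k j & j != entry s (hex_of u) (pos_of u) k].
Proof.
move=> n_gt0 lt_u lt_v u_neq_v.
have lt_un := hex_of_lt n_gt0 lt_u; have lt_vn := hex_of_lt n_gt0 lt_v.
have lt_q6 : pos_of v < 6 by have := pos_of_le5 v; lia.
have v_coord := esym (hexpos_of s v).
case: (ltngtP (hex_of u) (hex_of v)) => [lt_uv | lt_vu | eq_uv].
- exists (hex_of v), (pos_of v); split=> //; rewrite /entry lt_uv -lt0n.
  exact/pos_of_gt0/(leq_ltn_trans _ lt_uv).
- case: (eqVneq (pos_of v) (cut_pos s (hex_of v))) => [at_cut | off_cut]; last first.
    by exists (hex_of v), (pos_of v); split=> //; rewrite /entry ltnNge ltnW //= (gtn_eqF lt_vu).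
  exists (hex_of v).+1, 0; split; [lia | done | by rewrite hexpos_cut -at_cut |].
  rewrite /entry ltnNge lt_vu /=; case: (eqVneq (hex_of u) (hex_of v).+1) => [eq_u | _].
    by rewrite eq_sym -lt0n; apply: pos_of_gt0; lia.
  by rewrite eq_sym -lt0n (cut_pos_gt0 s (ltn0Sn _)).
- exists (hex_of v), (pos_of v); split=> //; rewrite /entry eq_uv ltnn eqxx.
  apply: contra u_neq_v => /eqP eq_pos.
  by rewrite -(hexpos_of s u) -(hexpos_of s v) eq_uv eq_pos.
Qed.

Lemma hexpos_lt s n k j : k < n -> j < 6 -> hexpos s k j < 5 * n + 1.
Proof.
rewrite /hexpos => lt_kn lt_j6; case: eqP => [_ | /eqP k_neq0]; first lia.
case: eqP => _; last lia.
case: k lt_kn k_neq0 => [|[|k]] // lt_kn _ /=; first lia.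
by have := ctype_dist_bounds (nth Para s k); lia.
Qed.

Section SpiroGraph.
Variables (n : nat) (s : seq ctype).
Hypothesis n_gt0 : 0 < n.

Lemma spiro_adjC (x y : 'I_(5 * n + 1)) : spiro_adj n s x y = spiro_adj n s y x.
Proof.
by apply/existsP/existsP => [] [k /existsP [j xy]]; exists k; apply/existsP; exists j; rewrite orbC.
Qed.

Lemma spiro_adj_hexpos (x y : 'I_(5 * n + 1)) k j : k < n -> j < 6 ->
  x = hexpos s k j :> nat -> y = hexpos s k ((j + 1) %% 6) :> nat -> spiro_adj n s x y.
Proof.
move=> lt_kn lt_j6 ex ey; apply/existsP; exists (Ordinal lt_kn).
by apply/existsP; exists (Ordinal lt_j6); rewrite /= -ex -ey !eqxx.
Qed.

Lemma vdist_adj u (x y : 'I_(5 * n + 1)) : spiro_adj n s x y -> vdist s u y <= vdist s u x + 1.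
Proof.
have lt_i6 : pos_of u < 6 by have := pos_of_le5 u; lia.
case/existsP => k /existsP [j /orP [] /andP [/eqP <- /eqP <-]];
  rewrite !vdist_hexpos ?ltn_pmod //;
  by have [] := chain_dist_succ s (hex_of u) k lt_i6 (ltn_ord j); lia.
Qed.

Lemma vdist_pred u (v : 'I_(5 * n + 1)) m : u < 5 * n + 1 -> vdist s u v = m.+1 ->
  exists2 w : 'I_(5 * n + 1), spiro_adj n s w v & vdist s u w = m.
Proof.
move=> lt_u dv; have u_neq_v : u != v by apply/eqP => eq_uv; move: dv; rewrite -eq_uv vdist_refl.
have [k [j [lt_kn lt_j6 v_eq off_j]]] := off_entry s n_gt0 lt_u (ltn_ord v) u_neq_v.
have lt_i6 : pos_of u < 6 by have := pos_of_le5 u; lia.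
move: off_j; set t := entry s (hex_of u) (pos_of u) k => off_j.
have lt_t6 : t < 6 := entry_lt6 s (hex_of u) k lt_i6.
have pos_tj : 0 < hexd t j by rewrite lt0n hexd_eq0 // eq_sym.
have [j' lt_j'6 [hexd_j' adj_j']] := hexd_step lt_t6 lt_j6 pos_tj.
exists (Ordinal (hexpos_lt s lt_kn lt_j'6)); last first.
  move: dv; rewrite /= v_eq !vdist_hexpos // /chain_dist -/t hexd_j'; lia.
case: adj_j' => [j'_eq | j_eq].
  by rewrite spiro_adjC; apply: (spiro_adj_hexpos (k := k) (j := j)); rewrite -?j'_eq.
by apply: (spiro_adj_hexpos (k := k) (j := j')); rewrite -?j_eq.
Qed.

Lemma gdist_spiro (u v : 'I_(5 * n + 1)) : gdist (spiro_adj n s) u v = vdist s u v.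
Proof.
apply: (gdist_profile (d := fun w : 'I_(5 * n + 1) => vdist s u w)) => [|w|w y|w m|w].
- exact: vdist_refl.
- by move/vdist_eq0/val_inj.
- exact: vdist_adj.
- exact: vdist_pred.
- have lt_q6 : pos_of w < 6 by have := pos_of_le5 w; lia.
  rewrite card_ord -(hexpos_of s w) (leq_ltn_trans (vdist_le _ _ _ lt_q6)) //.
  have := hex_of_lt n_gt0 (ltn_ord u); have := hex_of_lt n_gt0 (ltn_ord w); lia.
Qed.

End SpiroGraph.

(** * The Wiener index *)

Section WienerFormula.
Variable s : seq ctype.

Definition wiener_upto (N : nat) : nat := \sum_(0 <= v < N) \sum_(0 <= u < v) vdist s u v.

(* The transmission of c_k in the subchain H_0 ... H_(k-1). *)
Definition cut_transmission (k : nat) : nat :=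
  \sum_(0 <= u < 5 * k + 1) vdist s u (hexpos s k 0).

Lemma big_nat_offset (F : nat -> nat) a m :
  \sum_(a + 1 <= i < a + m) F i = \sum_(1 <= i < m) F (a + i).
Proof. by rewrite [a + 1]addnC big_addn addKn; apply: eq_bigr => i _; rewrite addnC. Qed.

Lemma sum_hexd p : p < 6 -> \sum_(0 <= i < 6) hexd i p = 9.
Proof. by case: p => [|[|[|[|[|[|]]]]]] //= _; rewrite unlock. Qed.

Lemma hexpos_new k j : 0 < k -> 0 < j < 6 -> hexpos s k j = 5 * k + j.
Proof. by rewrite /hexpos => /gtn_eqF -> /andP [/gtn_eqF ->]. Qed.

Lemma vdist_through_cut k u j : 0 < k -> u < 5 * k + 1 -> j < 6 ->
  vdist s u (hexpos s k j) = vdist s u (hexpos s k 0) + hexd 0 j.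
Proof.
move=> k_gt0 lt_u lt_j6; rewrite !vdist_hexpos // /chain_dist /entry.
by rewrite (hex_of_lt k_gt0 lt_u) hexdii addn0.
Qed.

Lemma vdist_in_hex k i j : 0 < k -> 0 < i < 6 -> j < 6 ->
  vdist s (5 * k + i) (hexpos s k j) = hexd i j.
Proof.
move=> k_gt0 /andP [i_gt0 lt_i6] lt_j6.
have i_coord : (i != 0) || (k == 0) by rewrite -lt0n i_gt0.
rewrite -(hexpos_new k_gt0 (_ : 0 < i < 6)) ?i_gt0 // vdist_hexpos //.
have [-> ->] := hexpos_coord s lt_i6 i_coord.
by rewrite /chain_dist /entry /entry_cost ltnn eqxx.
Qed.

Lemma column_sum k j : 0 < k -> 0 < j < 6 ->
  \sum_(0 <= u < 5 * k + j) vdist s u (5 * k + j) =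
  cut_transmission k + (5 * k + 1) * hexd 0 j + \sum_(1 <= i < j) hexd i j.
Proof.
move=> k_gt0 /andP [j_gt0 lt_j6].
rewrite (big_cat_nat _ (n := 5 * k + 1)) ?leq_addl //=; last lia.
rewrite -(hexpos_new k_gt0 (_ : 0 < j < 6)) ?j_gt0 //.
rewrite (eq_big_nat _ _ (F2 := fun u => vdist s u (hexpos s k 0) + hexd 0 j)); last first.
  by move=> u /andP [_ lt_u]; apply: vdist_through_cut.
rewrite big_split sum_nat_const_nat subn0 /= -/(cut_transmission k); congr (_ + _).
rewrite hexpos_new ?j_gt0 // big_nat_offset.
apply: eq_big_nat => i /andP [i_gt0 lt_ij].
by rewrite -(hexpos_new k_gt0 (_ : 0 < j < 6)) ?j_gt0 // vdist_in_hex ?i_gt0 //; lia.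
Qed.

Lemma wiener_upto_step k : 0 < k ->
  wiener_upto (5 * k.+1 + 1) = wiener_upto (5 * k + 1) + 5 * cut_transmission k + 45 * k + 27.
Proof.
move=> k_gt0; rewrite /wiener_upto (big_cat_nat _ (n := 5 * k + 1)) //=; last lia.
rewrite (_ : 5 * k.+1 + 1 = 5 * k + 6) ?big_nat_offset; last lia.
rewrite [X in _ + X](eq_big_nat _ _ (F2 := fun j => cut_transmission k + (5 * k + 1) * hexd 0 j +
                                        \sum_(1 <= i < j) hexd i j)); last first.
  by move=> j lt_j; rewrite column_sum.
rewrite !big_split /= sum_nat_const_nat -big_distrr /=.
have -> : \sum_(1 <= j < 6) hexd 0 j = 9 by rewrite unlock.
have -> : \sum_(1 <= j < 6) \sum_(1 <= i < j) hexd i j = 18 by rewrite unlock.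
lia.
Qed.

Lemma cut_transmission_step k : 0 < k ->
  cut_transmission k.+1 = cut_transmission k + 5 * k * cut_pos s k + 9.
Proof.
move=> k_gt0; have le_p3 := cut_pos_le3 s k.
rewrite /cut_transmission hexpos_cut (big_cat_nat _ (n := 5 * k + 1)) //=; last lia.
rewrite (eq_big_nat _ _ (F2 := fun u => vdist s u (hexpos s k 0) + cut_pos s k)); last first.
  by move=> u /andP [_ lt_u]; rewrite vdist_through_cut ?hexd0n //; lia.
rewrite big_split sum_nat_const_nat subn0 /= (_ : 5 * k.+1 + 1 = 5 * k + 6); last lia.
rewrite big_nat_offset [X in _ + X = _](eq_big_nat _ _ (F2 := fun i => hexd i (cut_pos s k))); last first.
  by move=> i /andP [i_gt0 lt_i6]; rewrite vdist_in_hex ?i_gt0 //; lia.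
have := sum_hexd (_ : cut_pos s k < 6); rewrite big_ltn // hexd0n //; lia.
Qed.

Definition cut_dist (i : nat) : nat := ctype_dist (nth Para s i).

Lemma cut_transmission_closed k : 0 < k ->
  cut_transmission k = 9 * k + 5 * \sum_(i < k.-1) i.+1 * cut_dist i.
Proof.
case: k => // k _; elim: k => [|k IHk]; first by rewrite big_ord0 /cut_transmission unlock.
by rewrite cut_transmission_step // IHk big_ord_recr /= /cut_dist; lia.
Qed.

Lemma sum_weights_step (d : nat -> nat) k :
  \sum_(i < k.+1 - 2) i.+1 * (k.+1 - 2 - i) * d i =
  \sum_(i < k - 2) i.+1 * (k - 2 - i) * d i + \sum_(i < k.-1) i.+1 * d i.
Proof.
case: k => [|[|j]]; rewrite ?big_ord0 // !subSS !subn0 /=.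
rewrite big_ord_recr [X in _ = _ + X]big_ord_recr /= subSnn muln1 addnA -big_split /=.
congr (_ + _); apply: eq_bigr => i _.
by rewrite subSn 1?ltnW // mulnSr mulnDl.
Qed.

Lemma wiener_upto_closed k : 0 < k -> wiener_upto (5 * k + 1) =
  27 * k + 45 * k * k.-1 + 25 * \sum_(i < k - 2) i.+1 * (k - 2 - i) * cut_dist i.
Proof.
case: k => // k _; elim: k => [|k IHk]; first by rewrite big_ord0 /wiener_upto unlock.
by rewrite wiener_upto_step // IHk cut_transmission_closed // [in RHS]sum_weights_step /=; nia.
Qed.

End WienerFormula.

Lemma spiro_wiener_upto n s : 0 < n -> spiro_wiener n s = wiener_upto s (5 * n + 1).
Proof.
move=> n_gt0; rewrite /spiro_wiener /wiener /wiener_upto big_mkord.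
under eq_bigr => u _ do rewrite big_mkcond.
rewrite exchange_big; apply: eq_bigr => v _.
rewrite big_mkord (big_ord_widen _ (fun u => vdist s u v) (ltnW (ltn_ord v))).
by rewrite [RHS]big_mkcond; apply: eq_bigr => u _; rewrite gdist_spiro.
Qed.

Theorem spiro_wiener_formula n s : 0 < n -> spiro_wiener n s =
  27 * n + 45 * n * n.-1 + 25 * \sum_(i < n - 2) i.+1 * (n - 2 - i) * cut_dist s i.
Proof. by move=> n_gt0; rewrite spiro_wiener_upto // wiener_upto_closed. Qed.

Definition weight (n i : nat) : nat := i.+1 * (n - 2 - i).

Definition deficit (s : seq ctype) (n : nat) : nat :=
  \sum_(i < n - 2) weight n i * (3 - cut_dist s i).

Lemma cut_dist_le3 s i : cut_dist s i <= 3.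
Proof. by rewrite /cut_dist; case: (nth _ _ _). Qed.

Lemma spiro_wiener_deficit n s : 0 < n ->
  spiro_wiener n s + 25 * deficit s n = spiro_wiener n (para_seq n).
Proof.
move=> n_gt0; rewrite !spiro_wiener_formula // -addnA -mulnDr -big_split /=.
congr (_ + 25 * _); apply: eq_bigr => i _.
rewrite -mulnDr subnKC ?cut_dist_le3 // /cut_dist /para_seq nth_nseq.
by case: ifP.
Qed.

(** * Reversing the chain *)

Section Reversal.
Variables (n : nat) (t : seq ctype).
Hypotheses (n_ge2 : 1 < n) (size_t : size t = n - 2).

Lemma cut_pos_rev k : 0 < k -> k <= n - 2 -> cut_pos (rev t) k = cut_pos t (n.-1 - k).
Proof.
case: k => // k _ le_kn; have -> : n.-1 - k.+1 = (n - 2 - k.+1).+1 by lia.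
by rewrite /= nth_rev ?size_t //; lia.
Qed.

(* H_k of the reversed chain is H_(n-1-k) of t, entered at the position
   flip_base k of c_(n-k) and traversed in the opposite direction. *)
Definition flip_base (k : nat) : nat := if k == 0 then 0 else cut_pos t (n.-1 - k).

Definition flip_pos (k j : nat) : nat := (flip_base k + 6 - j) %% 6.

Definition flip (v : nat) : nat := hexpos t (n.-1 - hex_of v) (flip_pos (hex_of v) (pos_of v)).

Lemma flip_base_le3 k : flip_base k <= 3.
Proof. by rewrite /flip_base; case: eqP => // _; apply: cut_pos_le3. Qed.

Lemma flip_pos_succ k j : j < 6 -> flip_pos k j = (flip_pos k ((j + 1) %% 6) + 1) %% 6.
Proof.
rewrite /flip_pos; have := flip_base_le3 k.
by case: (flip_base k) => [|[|[|[|//]]]] _; case: j => [|[|[|[|[|[|//]]]]]].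
Qed.

Lemma flip_hexpos k j : k < n -> j < 6 -> flip (hexpos (rev t) k j) = hexpos t (n.-1 - k) (flip_pos k j).
Proof.
move=> lt_kn lt_j6; case: (boolP ((j != 0) || (k == 0))) => [coord | ].
  by rewrite /flip; case: (hexpos_coord (rev t) lt_j6 coord) => -> ->.
rewrite negb_or negbK => /andP [/eqP -> ]; case: k lt_kn => // k lt_kn _.
have lt_p6 : cut_pos (rev t) k < 6 by have := cut_pos_le3 (rev t) k; lia.
have coord : (cut_pos (rev t) k != 0) || (k == 0).
  by case: (posnP k) => [-> // | /(cut_pos_gt0 (rev t))]; rewrite lt0n => ->.
rewrite hexpos_cut /flip; case: (hexpos_coord (rev t) lt_p6 coord) => -> ->.
have -> : flip_pos k.+1 0 = cut_pos t (n.-1 - k.+1).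
  by rewrite /flip_pos /flip_base /= subn0 modnDr modn_small //; have := cut_pos_le3 t (n.-1 - k.+1); lia.
have -> : n.-1 - k = (n.-1 - k.+1).+1 by lia.
rewrite -hexpos_cut; congr hexpos; rewrite /flip_pos /flip_base.
case: (eqVneq k 0) => [-> // | k_neq0].
rewrite cut_pos_rev ?lt0n //; last lia.
by rewrite addnC addnK modnn.
Qed.

Lemma flip_lt v : flip v < 5 * n + 1.
Proof.
apply: hexpos_lt (leq_ltn_trans (leq_subr _ _) _) (ltn_pmod _ _) => //.
by rewrite ltn_predL ltnW.
Qed.

Definition flip_ord (x : 'I_(5 * n + 1)) : 'I_(5 * n + 1) := Ordinal (flip_lt x).

Lemma flip_adj (x y : 'I_(5 * n + 1)) :
  spiro_adj n (rev t) x y -> spiro_adj n t (flip_ord x) (flip_ord y).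
Proof.
case/existsP => k /existsP [j xy]; have lt_kn := ltn_ord k; have lt_j6 := ltn_ord j.
have lt_k'n : n.-1 - k < n by lia.
have lt_j'6 : flip_pos k ((j + 1) %% 6) < 6 by apply: ltn_pmod.
have flip_j := flip_pos_succ k lt_j6.
case/orP: xy => /andP [/eqP ex /eqP ey]; first rewrite spiro_adjC;
  apply: (spiro_adj_hexpos (k := n.-1 - k) (j := flip_pos k ((j + 1) %% 6))) => //=;
  by rewrite -?ex -?ey flip_hexpos ?ltn_pmod // ?flip_j.
Qed.

End Reversal.

Lemma flip_base_rev n t k : 1 < n -> size t = n - 2 -> k < n ->
  flip_base n (rev t) (n.-1 - k) = flip_base n t k.
Proof.
move=> n_ge2 size_t lt_kn; rewrite /flip_base.
have [-> | k_gt0] := posnP k; first by rewrite subn0 subnn; case: eqP.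
have [k_eq | lt_k] := posnP (n.-1 - k).
  by rewrite k_eq; case: (k == 0).
rewrite subKn; last lia.
by rewrite (cut_pos_rev n_ge2 size_t) //; lia.
Qed.

Lemma flipK n t v : 1 < n -> size t = n - 2 -> v < 5 * n + 1 -> flip n (rev t) (flip n t v) = v.
Proof.
move=> n_ge2 size_t lt_v.
have lt_kn : hex_of v < n by apply: hex_of_lt; lia.
have lt_q6 : pos_of v < 6 by have := pos_of_le5 v; lia.
have size_rt : size (rev t) = n - 2 by rewrite size_rev.
have lt_j6 : flip_pos n t (hex_of v) (pos_of v) < 6 by apply: ltn_pmod.
rewrite [flip n t v]/flip; have := flip_hexpos n_ge2 size_rt (_ : n.-1 - hex_of v < n) lt_j6.
rewrite revK => -> //; last lia.
rewrite subKn; last lia.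
rewrite /flip_pos flip_base_rev //; have := flip_base_le3 n t (hex_of v).
move=> le_b3; rewrite -[in RHS](hexpos_of (rev t) v); congr hexpos; move: le_b3.
by case: (flip_base _ _ _) => [|[|[|[|//]]]] _; case: (pos_of v) lt_q6 => [|[|[|[|[|[|//]]]]]].
Qed.

Lemma spiro_rev_iso n t : 1 < n -> size t = n - 2 ->
  graph_iso (spiro_adj n (rev t)) (spiro_adj n t).
Proof.
move=> n_ge2 size_t; have size_rt : size (rev t) = n - 2 by rewrite size_rev.
have flip_ordK : cancel (flip_ord t n_ge2) (flip_ord (rev t) n_ge2).
  by move=> x; apply: val_inj; rewrite /= flipK.
have flip_ordKV : cancel (flip_ord (rev t) n_ge2) (flip_ord t n_ge2).
  by move=> x; apply: val_inj; have := flipK n_ge2 size_rt (ltn_ord x); rewrite revK.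
exists (flip_ord t n_ge2); split; first by exists (flip_ord (rev t) n_ge2).
move=> x y; apply/idP/idP; first exact: flip_adj.
rewrite -{1}(revK t) => /(@flip_adj _ _ n_ge2 size_rt).
by rewrite !flip_ordK.
Qed.

(** * The extremal chains *)

Definition defect_seq (m j : nat) (c : ctype) : seq ctype :=
  nseq j Para ++ c :: nseq (m - j - 1) Para.

Lemma size_defect_seq m j c : j < m -> size (defect_seq m j c) = m.
Proof. by rewrite /defect_seq size_cat /= !size_nseq; lia. Qed.

Lemma nth_defect_seq m j c i : nth Para (defect_seq m j c) i = if i == j then c else Para.
Proof.
rewrite /defect_seq nth_cat size_nseq nth_nseq; case: (ltngtP i j) => [// | lt_ji | ->].
  by rewrite -(subnSK lt_ji) /= nth_nseq if_same.
by rewrite subnn.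
Qed.

Lemma cut_dist_eq3 s i : cut_dist s i = 3 -> nth Para s i = Para.
Proof. by rewrite /cut_dist; case: (nth _ _ _). Qed.

Lemma defect_seqP s m j : size s = m -> j < m ->
  (forall i, i < m -> i != j -> cut_dist s i = 3) -> s = defect_seq m j (nth Para s j).
Proof.
move=> size_s lt_jm para_i; apply: (eq_from_nth (x0 := Para)); first by rewrite size_defect_seq.
move=> i; rewrite size_s nth_defect_seq => lt_im.
by case: eqP => [-> // | /eqP i_neq]; apply/cut_dist_eq3/para_i.
Qed.

Lemma second_seqE n : 3 <= n -> second_seq n = defect_seq (n - 2) (n - 3) Meta.
Proof. by move=> n_ge3; rewrite /second_seq /defect_seq -cats1 (_ : n - 2 - (n - 3) - 1 = 0) //; lia. Qed.

Lemma rev_second_seqE n : 3 <= n -> rev (second_seq n) = defect_seq (n - 2) 0 Meta.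
Proof.
by move=> n_ge3; rewrite /second_seq rev_rcons rev_nseq /defect_seq (_ : n - 2 - 0 - 1 = n - 3) //; lia.
Qed.

Lemma third_seqE n : 4 <= n -> third_seq n = defect_seq (n - 2) (n - 4) Meta.
Proof. by move=> n_ge4; rewrite /third_seq /defect_seq (_ : n - 2 - (n - 4) - 1 = 1) //; lia. Qed.

Lemma rev_third_seqE n : 4 <= n -> rev (third_seq n) = defect_seq (n - 2) 1 Meta.
Proof.
by move=> n_ge4; rewrite /third_seq rev_cat rev_nseq /defect_seq (_ : n - 2 - 1 - 1 = n - 4) //; lia.
Qed.

Lemma weightE n j : j < n - 2 -> weight n j = n - 2 + j * (n - 3 - j).
Proof. by rewrite /weight => lt_j; nia. Qed.

Lemma weight_ge n j : j < n - 2 -> n - 2 <= weight n j.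
Proof. by move=> lt_j; rewrite weightE ?leq_addr. Qed.

Lemma weight_inner n j : 0 < j < n - 3 -> weight n j = 2 * (n - 3) + (j - 1) * (n - 4 - j).
Proof. by move=> lt_j; rewrite weightE; nia. Qed.

Lemma deficit_defect_seq n j c : j < n - 2 ->
  deficit (defect_seq (n - 2) j c) n = weight n j * (3 - ctype_dist c).
Proof.
move=> lt_j; rewrite /deficit (bigD1 (Ordinal lt_j)) //= big1 ?addn0.
  by rewrite /cut_dist nth_defect_seq eqxx.
by move=> i i_neq; rewrite /cut_dist nth_defect_seq ifF ?subnn ?muln0 //; apply/negbTE.
Qed.

Lemma deficit_ge_weight s n j : j < n - 2 -> cut_dist s j < 3 -> weight n j <= deficit s n.
Proof.
move=> lt_j defect_j; rewrite /deficit (bigD1 (Ordinal lt_j)) //=.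
by apply: leq_trans (leq_addr _ _); rewrite leq_pmulr // subn_gt0.
Qed.

Lemma deficit_ge_weight2 s n i j : i < n - 2 -> j < n - 2 -> i != j ->
  cut_dist s i < 3 -> cut_dist s j < 3 -> weight n i + weight n j <= deficit s n.
Proof.
move=> lt_i lt_j i_neq_j defect_i defect_j.
rewrite /deficit (bigD1 (Ordinal lt_i)) //= (bigD1 (Ordinal lt_j)) /=; last first.
  by rewrite -val_eqE /= eq_sym.
rewrite addnA; apply: leq_trans (leq_addr _ _).
by apply: leq_add; rewrite leq_pmulr // subn_gt0.
Qed.

Lemma para_seqP s n : size s = n - 2 -> (forall i, i < n - 2 -> cut_dist s i = 3) -> s = para_seq n.
Proof.
move=> size_s all_para; apply: (eq_from_nth (x0 := Para)); rewrite size_s ?size_nseq // => i lt_i.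
by rewrite nth_nseq lt_i; apply/cut_dist_eq3/all_para.
Qed.

Lemma exists_defect s n : size s = n - 2 -> s <> para_seq n ->
  exists2 j, j < n - 2 & cut_dist s j < 3.
Proof.
move=> size_s s_neq.
case: (boolP [exists j : 'I_(n - 2), cut_dist s j < 3]) => [/existsP [j defect_j] | /existsPn all_para].
  by exists j.
case: s_neq; apply: para_seqP => // i lt_i; have /= := all_para (Ordinal lt_i).
by have := cut_dist_le3 s i; lia.
Qed.

Lemma deficit_eq0 s n : size s = n - 2 -> deficit s n = 0 -> s = para_seq n.
Proof.
move=> size_s deficit0; apply: para_seqP => // i lt_i.
have := cut_dist_le3 s i; rewrite leq_eqVlt => /orP [/eqP // | defect_i].
by have := leq_trans (weight_ge lt_i) (deficit_ge_weight lt_i defect_i); rewrite deficit0; lia.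
Qed.

Lemma single_defect s n : size s = n - 2 -> s <> para_seq n -> deficit s n < 2 * (n - 2) ->
  exists2 j, j < n - 2 & s = defect_seq (n - 2) j (nth Para s j) /\ cut_dist s j < 3.
Proof.
move=> size_s s_neq small; have [j lt_j defect_j] := exists_defect size_s s_neq.
exists j => //; split=> //; apply: defect_seqP => // i lt_i i_neq_j.
have := cut_dist_le3 s i; rewrite leq_eqVlt => /orP [/eqP // | defect_i].
have := deficit_ge_weight2 lt_i lt_j i_neq_j defect_i defect_j.
by have := weight_ge lt_i; have := weight_ge lt_j; lia.
Qed.

Lemma cut_dist_eq2 s i : cut_dist s i = 2 -> nth Para s i = Meta.
Proof. by rewrite /cut_dist; case: (nth _ _ _). Qed.

Lemma deficit_single s n j : j < n - 2 -> s = defect_seq (n - 2) j (nth Para s j) ->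
  deficit s n = weight n j * (3 - cut_dist s j).
Proof. by move=> lt_j s_eq; rewrite {1}s_eq deficit_defect_seq. Qed.

Lemma deficit_second s n : 4 <= n -> size s = n - 2 -> s <> para_seq n ->
  n - 2 <= deficit s n /\
  (deficit s n = n - 2 -> s = second_seq n \/ s = rev (second_seq n)).
Proof.
move=> n_ge4 size_s s_neq; have [j lt_j defect_j] := exists_defect size_s s_neq.
split; first exact: leq_trans (weight_ge lt_j) (deficit_ge_weight lt_j defect_j).
move=> deficit_eq; have small : deficit s n < 2 * (n - 2) by lia.
have [k lt_k [s_eq defect_k]] := single_defect size_s s_neq small.
have := deficit_single lt_k s_eq; rewrite deficit_eq weightE // => weight_eq.
have meta_k : nth Para s k = Meta by apply: cut_dist_eq2; nia.
rewrite s_eq meta_k rev_second_seqE ?second_seqE; try lia.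
have [-> | ->] : k = 0 \/ k = n - 3 by nia.
  by right.
by left.
Qed.

Lemma deficit_third s n : 5 <= n -> size s = n - 2 ->
  s <> para_seq n -> s <> second_seq n -> s <> rev (second_seq n) ->
  2 * (n - 3) <= deficit s n /\
  (deficit s n = 2 * (n - 3) -> s = third_seq n \/ s = rev (third_seq n)).
Proof.
move=> n_ge5 size_s s_neq s_neq2 s_neq2r.
case: (leqP (2 * (n - 2)) (deficit s n)) => [large | small]; first by split; lia.
have [k lt_k [s_eq defect_k]] := single_defect size_s s_neq small.
have deficit_k := deficit_single lt_k s_eq.
have meta_k : cut_dist s k = 2.
  have [d1 | //] : cut_dist s k = 1 \/ cut_dist s k = 2.
    by have := ctype_dist_bounds (nth Para s k); rewrite /cut_dist in defect_k *; lia.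
  by move: small; rewrite deficit_k d1; have := weight_ge lt_k; lia.
have s_meta : s = defect_seq (n - 2) k Meta by rewrite s_eq cut_dist_eq2.
have k_gt0 : 0 < k.
  rewrite lt0n; apply/eqP => k0; apply: s_neq2r.
  by rewrite s_meta k0 rev_second_seqE //; lia.
have k_lt : k < n - 3.
  have : k != n - 3.
    apply/eqP => k_end; apply: s_neq2.
    by rewrite s_meta k_end second_seqE //; lia.
  lia.
rewrite deficit_k meta_k muln1 weight_inner ?k_gt0 //; split; first exact: leq_addr.
move=> /eqP; rewrite -[X in _ == X]addn0 eqn_add2l muln_eq0 => /orP [] /eqP k_end.
  by right; rewrite s_meta rev_third_seqE; [congr defect_seq; lia | lia].
by left; rewrite s_meta third_seqE; [congr defect_seq; lia | lia].
Qed.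

Section Ranking.
Variable n : nat.
Hypothesis n_ge2 : 1 < n.

Lemma spiro_wiener_iso s1 s2 :
  graph_iso (spiro_adj n s1) (spiro_adj n s2) -> spiro_wiener n s1 = spiro_wiener n s2.
Proof.
have n_gt0 : 0 < n by rewrite ltnW.
by apply: wiener_iso => u v; rewrite !gdist_spiro // vdistC.
Qed.

Lemma spiro_iso_rev s t : size t = n - 2 -> s = t \/ s = rev t ->
  graph_iso (spiro_adj n s) (spiro_adj n t).
Proof. by move=> size_t [] ->; [apply: graph_iso_refl | apply: spiro_rev_iso]. Qed.

Lemma not_iso_deficit s t : deficit s n <> deficit t n ->
  ~ graph_iso (spiro_adj n s) (spiro_adj n t).
Proof.
move=> neq_deficit /spiro_wiener_iso eq_wiener; apply: neq_deficit.
have := spiro_wiener_deficit s (ltnW n_ge2); have := spiro_wiener_deficit t (ltnW n_ge2); lia.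
Qed.

Lemma wiener_rank s t : deficit t n <= deficit s n ->
  (deficit s n = deficit t n -> graph_iso (spiro_adj n s) (spiro_adj n t)) ->
  spiro_wiener n s <= spiro_wiener n t /\
  (spiro_wiener n s = spiro_wiener n t -> graph_iso (spiro_adj n s) (spiro_adj n t)).
Proof.
move=> le_deficit iso_eq.
have := spiro_wiener_deficit s (ltnW n_ge2); have := spiro_wiener_deficit t (ltnW n_ge2).
by split=> [|eq_wiener]; [lia | apply: iso_eq; lia].
Qed.

End Ranking.

Lemma deficit_para n : deficit (para_seq n) n = 0.
Proof. by rewrite /deficit big1 // => i _; rewrite /cut_dist nth_nseq; case: ifP; rewrite muln0. Qed.

Lemma deficit_second_seq n : 3 <= n -> deficit (second_seq n) n = n - 2.
Proof. by move=> n_ge3; rewrite second_seqE // deficit_defect_seq /weight /=; nia. Qed.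

Lemma deficit_third_seq n : 5 <= n -> deficit (third_seq n) n = 2 * (n - 3).
Proof. by move=> n_ge5; rewrite third_seqE ?deficit_defect_seq /weight /=; nia. Qed.

Theorem theorem2p5 (n : nat) : 4 <= n ->
  let G := spiro_adj n in
  let W := spiro_wiener n in
  (forall s : seq ctype, size s = n - 2 ->
     W s <= W (para_seq n) /\
     (W s = W (para_seq n) -> graph_iso (G s) (G (para_seq n)))) /\
  ~ graph_iso (G (second_seq n)) (G (para_seq n)) /\
  (forall s : seq ctype, size s = n - 2 ->
     ~ graph_iso (G s) (G (para_seq n)) ->
     W s <= W (second_seq n) /\
     (W s = W (second_seq n) -> graph_iso (G s) (G (second_seq n)))) /\
  (* For n = 4 the chain (m, p) of (iii) is the reversal of (p, m). *)
  (5 <= n ->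
  ~ graph_iso (G (third_seq n)) (G (para_seq n)) /\
  ~ graph_iso (G (third_seq n)) (G (second_seq n)) /\
  (forall s : seq ctype, size s = n - 2 ->
     ~ graph_iso (G s) (G (para_seq n)) ->
     ~ graph_iso (G s) (G (second_seq n)) ->
     W s <= W (third_seq n) /\
     (W s = W (third_seq n) -> graph_iso (G s) (G (third_seq n))))).
Proof.
move=> n_ge4 G W; rewrite {}/G {}/W; have n_ge2 : 1 < n by lia.
have size_second : size (second_seq n) = n - 2 by rewrite second_seqE ?size_defect_seq; lia.
have not_iso_neq t s : size t = n - 2 -> ~ graph_iso (spiro_adj n s) (spiro_adj n t) ->
    s <> t /\ s <> rev t.
  by move=> size_t not_iso; split=> s_eq; apply/not_iso/(spiro_iso_rev n_ge2 size_t); [left | right].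
split.
  move=> s size_s; apply: wiener_rank => //; rewrite deficit_para // => /(deficit_eq0 size_s) ->.
  exact: graph_iso_refl.
split; first by apply: not_iso_deficit; rewrite // deficit_second_seq ?deficit_para; lia.
split.
  move=> s size_s /(not_iso_neq _ _ (size_nseq _ _)) [s_neq _].
  have [le_deficit eq_deficit] := deficit_second n_ge4 size_s s_neq.
  apply: wiener_rank; rewrite // deficit_second_seq; try lia.
  by move/eq_deficit/(spiro_iso_rev n_ge2 size_second).
move=> n_ge5; split; [|split].
- by apply: not_iso_deficit; rewrite // deficit_third_seq ?deficit_para; lia.
- by apply: not_iso_deficit; rewrite // deficit_third_seq ?deficit_second_seq; lia.
move=> s size_s /(not_iso_neq _ _ (size_nseq _ _)) [s_neq _] /(not_iso_neq _ _ size_second) [].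
move=> s_neq2 s_neq2r; have [le_deficit eq_deficit] := deficit_third n_ge5 size_s s_neq s_neq2 s_neq2r.
apply: wiener_rank; rewrite // deficit_third_seq //.
have size_third : size (third_seq n) = n - 2 by rewrite third_seqE ?size_defect_seq; lia.
by move/eq_deficit/(spiro_iso_rev n_ge2 size_third).
Qed.
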